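(* Let $\epsilon>0$, $n\ge1$, $s=\sqrt{e^\epsilon}$, and let $\mathbf{w}\in\mathbb{R}^d$ be non-increasing. For parameters $\mathbf{m}$ (with $m_j\ge0$, $\sum_jm_j=1$) and $c\in\mathbb{R}$, let $\mathrm{err}_{\mathrm{MSE}}(\mathbf{m},c)=\mathbb{E}[|\tilde\theta-\theta|_2^2]$, where $n$ voters with scored votes $v^{(1)},\dots,v^{(n)}$ independently apply the weighted sampling mechanism with parameters $(\epsilon,\mathbf{w},\mathbf{m},c)$ to get $\tilde v^{(i)}$, $\theta=\frac1n\sum_iv^{(i)}$, $\tilde\theta=\frac1n\sum_i\tilde v^{(i)}$. Then $$\min_{\mathbf{m},c}\mathrm{err}_{\mathrm{MSE}}(\mathbf{m},c)\le\frac1n\Big(1+\frac{ds}{(s-1)^2}\Big)\Big(\sum_{j=1}^d|w_j-w_{\lceil d/2\rceil}|\Big)^2.$$ Moreover, if $\mathbf{w}$ is not constant, this upper bound holds for the choice $c^*=w_{\lceil d/2\rceil}$ and $m^*_j=\frac{|w_j-c^*|}{\sum_{i=1}^d|w_i-c^*|}$.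
   Context: Candidates are $A_1,\dots,A_d$; a vote $\pi$ is a linear ordering, $\pi_j$ the index of the candidate at rank $j$; the scored vote is $v$ with $v_{\pi_j}=w_j$. The weighted sampling mechanism with parameters $(\epsilon,\mathbf{w},\mathbf{m},c)$, on input $\pi$: (1) samples a rank $j^*$ with $\Pr[j^*=j]=m_j$, independently of $\pi$; (2) sets $B\in\{0,1\}^d$ with $B_{\pi_{j^*}}=1$, other entries $0$; (3) independently for each $k$, sets $\tilde B_k=1-B_k$ with probability $\frac1{s+1}$, else $\tilde B_k=B_k$; (4) outputs $\tilde v_k=\frac{(s+1)\tilde B_k-1}{s-1}\cdot\frac{w_{j^*}-c}{m_{j^*}}+c$. *)

From HB Require Import structures.
From mathcomp Require Import all_boot all_order all_algebra fingroup perm.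
From mathcomp Require Import reals.
From mathcomp Require Import sequences exp.
Set Implicit Arguments. Unset Strict Implicit. Unset Printing Implicit Defensive.
Import Order.TTheory GRing.Theory Num.Theory.
Local Open Scope ring_scope.

Section WS.
Variable R : realType.

Definition s_of (eps : R) : R := Num.sqrt (expR eps).

(* scored vote of the ranking pi (pi j = candidate at rank j): v_{pi j} = w j *)
Definition scored d (w : 'I_d -> R) (pi : {perm 'I_d}) (k : 'I_d) : R :=
  w ((pi^-1)%g k).

Definition valid_m d (m : 'I_d -> R) : Prop :=
  (forall j, 0 <= m j) /\ \sum_(j < d) m j = 1.

Definition flip_prob (s : R) (b : bool) : R :=
  if b then 1 / (s + 1) else 1 - 1 / (s + 1).

Definition ws_prob d (s : R) (m : 'I_d -> R) (j : 'I_d) (f : {ffun 'I_d -> bool}) : R :=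
  m j * \prod_(k < d) flip_prob s (f k).

(* output coordinate k of the weighted sampling mechanism, given the
   sampled rank j and flip pattern f (f k = true iff bit k is flipped) *)
Definition ws_out d (s : R) (w m : 'I_d -> R) (c : R) (pi : {perm 'I_d})
    (j : 'I_d) (f : {ffun 'I_d -> bool}) (k : 'I_d) : R :=
  let Bt := ((pi j == k) (+) f k) in
  (((s + 1) * (Bt%:R) - 1) / (s - 1)) * ((w j - c) / m j) + c.

(* err_MSE(m,c) = E |theta~ - theta|_2^2 for the vote profile pis of n voters,
   each voter running the mechanism independently. *)
Definition errMSE (eps : R) n d (w m : 'I_d -> R) (c : R)
    (pis : 'I_n -> {perm 'I_d}) : R :=
  let s := s_of eps in
  \sum_(o : {ffun 'I_n -> 'I_d * {ffun 'I_d -> bool}})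
    (\prod_(i < n) ws_prob s m (o i).1 (o i).2) *
    \sum_(k < d)
      ((n%:R)^-1 * \sum_(i < n) ws_out s w m c (pis i) (o i).1 (o i).2 k
       - (n%:R)^-1 * \sum_(i < n) scored w (pis i) k) ^+ 2.

(* w_{ceil(d/2)} (1-indexed), i.e. index (d-1)/2 (0-indexed) *)
Lemma mid_lt d : (0 < d)%N -> ((d.-1)./2 < d)%N.
Proof. by case: d => // d _; rewrite ltnS -divn2 leq_div. Qed.

Definition w_mid d (hd : (0 < d)%N) (w : 'I_d -> R) : R :=
  w (Ordinal (mid_lt hd)).

Definition m_star d (w : 'I_d -> R) (cs : R) : 'I_d -> R :=
  fun j => `|w j - cs| / \sum_(i < d) `|w i - cs|.

Definition bound (eps : R) n d (w : 'I_d -> R) (cs : R) : R :=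
  let s := s_of eps in
  (n%:R)^-1 * (1 + d%:R * s / (s - 1) ^+ 2) * (\sum_(j < d) `|w j - cs|) ^+ 2.

End WS.

From HB Require Import structures.
From mathcomp Require Import all_boot all_order all_algebra fingroup perm.
From mathcomp Require Import reals.
From mathcomp Require Import sequences exp.
From mathcomp Require Import ring.
Import Order.TTheory GRing.Theory Num.Theory.
Local Open Scope ring_scope.

(* Each voter's output is an unbiased estimate of its scored vote: the
   randomized-response bit de-biases to the indicator B, and dividing by m_j
   undoes the sampling of the rank.  By independence the MSE is 1/n^2 times
   the sum of the per-voter variances, and each variance is at most the second
   moment about c, namely (1 + d s/(s-1)^2) * sum_j (w_j - c)^2 / m_j.  For
   m_j proportional to |w_j - c| this sum is (sum_j |w_j - c|)^2.  Neither the
   monotonicity of w nor the choice of c = w_mid plays a role in the bound. *)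

Section ProductExpectation.
Context {R : comNzRingType} {I J : finType} (q : J -> R).
Hypothesis q_sum1 : \sum_j q j = 1.

Lemma sum_ffun_prod_pair (a b : I) (ha hb : J -> R) :
  \sum_(f : {ffun I -> J}) (\prod_i q (f i)) * (ha (f a) * hb (f b)) =
  if a == b then \sum_j q j * (ha j * hb j)
  else (\sum_j q j * ha j) * (\sum_j q j * hb j).
Proof.
pose g i j := q j * ((if i == a then ha j else 1) * (if i == b then hb j else 1)).
have prod_at (x : I) (F : I -> R) : \prod_i (if i == x then F i else 1) = F x.
  by rewrite -big_mkcond big_pred1_eq.
have g_other i : i != a -> i != b -> \sum_j g i j = 1.
  by rewrite /g => /negbTE-> /negbTE->; under eq_bigr do rewrite !mulr1.
transitivity (\sum_(f : {ffun I -> J}) \prod_i g i (f i)).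
  apply: eq_bigr => f _; rewrite !big_split /=.
  by rewrite (prod_at a (fun i => ha (f i))) (prod_at b (fun i => hb (f i))).
rewrite -(bigA_distr_bigA g) (bigD1 a) //=.
have [eab|nab] := eqVneq a b.
  subst b; rewrite [X in _ * X]big1 ?mulr1 => [|i nia]; last exact: g_other.
  by apply: eq_bigr => j _; rewrite /g eqxx.
rewrite (bigD1 b) 1?eq_sym //= [X in _ * (_ * X)]big1 ?mulr1 => [|i /andP[]];
  last exact: g_other.
by congr (_ * _); apply: eq_bigr => j _;
  rewrite /g eqxx ?(negbTE nab) 1?eq_sym ?(negbTE nab) ?mulr1 ?mul1r.
Qed.

Lemma sum_ffun_prod_coord (a : I) (h : J -> R) :
  \sum_(f : {ffun I -> J}) (\prod_i q (f i)) * h (f a) = \sum_j q j * h j.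
Proof.
have := sum_ffun_prod_pair a a h (fun _ => 1); rewrite eqxx.
under eq_bigr do rewrite mulr1.
by under [in RHS]eq_bigr do rewrite mulr1.
Qed.

End ProductExpectation.

Lemma sum_sq_dev_mean_le (R : realDomainType) (T : finType) (P Y : T -> R) (v c : R) :
  \sum_t P t = 1 -> \sum_t P t * Y t = v ->
  \sum_t P t * (Y t - v) ^+ 2 <= \sum_t P t * (Y t - c) ^+ 2.
Proof.
move=> P1 PY; rewrite -subr_ge0 -sumrB.
rewrite (eq_bigr (fun t => 2 * (v - c) * (P t * Y t) + (c ^+ 2 - v ^+ 2) * P t));
  last by move=> t _; ring.
rewrite big_split /= -!mulr_sumr PY P1.
have -> : 2 * (v - c) * v + (c ^+ 2 - v ^+ 2) * 1 = (v - c) ^+ 2 by ring.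
exact: sqr_ge0.
Qed.

(* Independence and unbiasedness kill the cross terms of the expanded square. *)
Lemma mse_average_independent (R : fieldType) (n d : nat) (T : finType)
    (q : T -> R) (Y : 'I_n -> 'I_d -> T -> R) (v : 'I_n -> 'I_d -> R) :
  \sum_t q t = 1 -> (forall i k, \sum_t q t * Y i k t = v i k) ->
  \sum_(o : {ffun 'I_n -> T}) (\prod_i q (o i)) *
    \sum_(k < d) ((n%:R)^-1 * \sum_(i < n) Y i k (o i)
                  - (n%:R)^-1 * \sum_(i < n) v i k) ^+ 2
  = (n%:R)^-1 ^+ 2 * \sum_(i < n) \sum_(k < d) \sum_t q t * (Y i k t - v i k) ^+ 2.
Proof.
move=> q1 qY; pose Z i k t := Y i k t - v i k.
have Z_centered i k : \sum_t q t * Z i k t = 0.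
  rewrite /Z; under eq_bigr do rewrite mulrBr.
  by rewrite sumrB qY -mulr_suml q1 mul1r subrr.
have cross i i' k :
    \sum_(o : {ffun 'I_n -> T}) (\prod_j q (o j)) * (Z i k (o i) * Z i' k (o i'))
    = if i == i' then \sum_t q t * Z i k t ^+ 2 else 0.
  rewrite sum_ffun_prod_pair //; have [<-|_] := eqVneq i i'.
    by under eq_bigr do rewrite -expr2.
  by rewrite Z_centered mul0r.
have square o k :
    ((n%:R)^-1 * \sum_(i < n) Y i k (o i) - (n%:R)^-1 * \sum_(i < n) v i k) ^+ 2 =
    \sum_(i < n) \sum_(i' < n) (n%:R)^-1 ^+ 2 * (Z i k (o i) * Z i' k (o i')).
  rewrite -mulrBr -sumrB exprMn; under [in RHS]eq_bigr do rewrite -mulr_sumr.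
  rewrite -mulr_sumr; congr (_ * _).
  by rewrite expr2 mulr_suml; apply: eq_bigr => i _; rewrite mulr_sumr.
transitivity (\sum_(k < d) \sum_(i < n) \sum_(i' < n) (n%:R)^-1 ^+ 2 *
    \sum_(o : {ffun 'I_n -> T}) (\prod_j q (o j)) * (Z i k (o i) * Z i' k (o i'))).
  under eq_bigr do rewrite mulr_sumr; rewrite exchange_big /=.
  apply: eq_bigr => k _.
  transitivity (\sum_(o : {ffun 'I_n -> T}) \sum_(i < n) \sum_(i' < n)
      (n%:R)^-1 ^+ 2 * ((\prod_j q (o j)) * (Z i k (o i) * Z i' k (o i')))).
    apply: eq_bigr => o _; rewrite square mulr_sumr; apply: eq_bigr => i _.
    by rewrite mulr_sumr; apply: eq_bigr => i' _; rewrite mulrCA.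
  rewrite exchange_big; apply: eq_bigr => i _; rewrite exchange_big.
  by apply: eq_bigr => i' _; rewrite mulr_sumr.
rewrite exchange_big mulr_sumr; apply: eq_bigr => i _; rewrite mulr_sumr.
apply: eq_bigr => k _; under eq_bigr do rewrite cross.
by rewrite -mulr_sumr -big_mkcond (big_pred1 i) // => j; rewrite /= eq_sym.
Qed.

Section RandomizedResponse.
Context {R : realType} (s : R).
Hypothesis s_gt1 : 1 < s.

Definition debias (B b : bool) : R := ((s + 1) * (B (+) b)%:R - 1) / (s - 1).

Lemma sum_flip_prob : \sum_b flip_prob s b = 1.
Proof. by rewrite big_bool /flip_prob /=; ring. Qed.

Let s_sub1_neq0 : s - 1 != 0. Proof. by rewrite subr_eq0 gt_eqF. Qed.
Let s_add1_neq0 : s + 1 != 0.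
Proof. by rewrite lt0r_neq0 // addr_gt0 // (lt_trans ltr01). Qed.

Lemma mean_debias B : \sum_b flip_prob s b * debias B b = B%:R.
Proof.
by case: B; rewrite big_bool /flip_prob /debias /=; field; rewrite s_sub1_neq0 s_add1_neq0.
Qed.

Lemma mean_debias_sq B :
  \sum_b flip_prob s b * debias B b ^+ 2 = s / (s - 1) ^+ 2 + B%:R.
Proof.
by case: B; rewrite big_bool /flip_prob /debias /=; field; rewrite s_sub1_neq0 s_add1_neq0.
Qed.

End RandomizedResponse.

(* This is sum_j (w_j - c)^2 / m_j, written so that terms with m_j = 0 vanish. *)
Definition sampling_cost {R : realType} {d} (w m : 'I_d -> R) (c : R) : R :=
  \sum_j m j * ((w j - c) / m j) ^+ 2.

Section OneVoter.
Context {R : realType} {d : nat} {s : R} {w m : 'I_d -> R} {c : R}.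
Hypotheses (s_gt1 : 1 < s) (m_valid : valid_m m).
Hypothesis m_support : forall j, m j = 0 -> w j = c.

Lemma sum_prod_flip_prob :
  \sum_(f : {ffun 'I_d -> bool}) \prod_k flip_prob s (f k) = 1.
Proof.
rewrite -(bigA_distr_bigA (fun _ b => flip_prob s b)) /=.
by apply: big1 => k _; exact: sum_flip_prob.
Qed.

Lemma sum_ws_prob :
  \sum_(t : 'I_d * {ffun 'I_d -> bool}) ws_prob s m t.1 t.2 = 1.
Proof.
case: m_valid => _ <-; rewrite -(pair_bigA _ (ws_prob s m)) /=.
by apply: eq_bigr => j _; rewrite /ws_prob -mulr_sumr sum_prod_flip_prob mulr1.
Qed.

Lemma ws_out_debias pi j f k :
  ws_out s w m c pi j f k = debias s (pi j == k) (f k) * ((w j - c) / m j) + c.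
Proof. by []. Qed.

Lemma sum_ws_prob_coord (pi : {perm 'I_d}) k (h : 'I_d -> bool -> R) :
  \sum_(t : 'I_d * {ffun 'I_d -> bool}) ws_prob s m t.1 t.2 * h t.1 (t.2 k) =
  \sum_j m j * \sum_b flip_prob s b * h j b.
Proof.
rewrite -(pair_bigA _ (fun j f => ws_prob s m j f * h j (f k))) /=.
apply: eq_bigr => j _; rewrite -(sum_ffun_prod_coord _ (sum_flip_prob s) k).
by rewrite mulr_sumr; apply: eq_bigr => f _; rewrite /ws_prob mulrA.
Qed.

Lemma ws_out_unbiased (pi : {perm 'I_d}) k :
  \sum_(t : 'I_d * {ffun 'I_d -> bool})
     ws_prob s m t.1 t.2 * ws_out s w m c pi t.1 t.2 k = scored w pi k.
Proof.
have mK j : m j * ((w j - c) / m j) = w j - c.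
  have [mj0|mj_neq0] := eqVneq (m j) 0; last by rewrite mulrC divfK.
  by rewrite (m_support j mj0) subrr mul0r mulr0.
rewrite (sum_ws_prob_coord pi k (fun j b => debias s (pi j == k) b * ((w j - c) / m j) + c)).
under eq_bigr => j _.
  rewrite (eq_bigr (fun b => flip_prob s b * debias s (pi j == k) b * ((w j - c) / m j)
                             + flip_prob s b * c)); last by move=> b _; rewrite mulrDr mulrA.
  rewrite big_split /= -!mulr_suml mean_debias // sum_flip_prob mul1r.
  rewrite mulrDr mulrCA mK.
  over.
case: m_valid => _ m_sum1.
rewrite big_split /= -mulr_suml m_sum1 mul1r (bigD1 ((pi^-1)%g k)) //= permKV eqxx mul1r.
rewrite big1 ?addr0 => [|j nj]; first by rewrite /scored subrK.
rewrite (_ : (pi j == k) = false) ?mul0r //.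
by apply: contraNF nj => /eqP <-; rewrite permK.
Qed.

Lemma sum_ws_out_sq_dev (pi : {perm 'I_d}) :
  \sum_k \sum_(t : 'I_d * {ffun 'I_d -> bool})
     ws_prob s m t.1 t.2 * (ws_out s w m c pi t.1 t.2 k - c) ^+ 2 =
  (1 + d%:R * s / (s - 1) ^+ 2) * sampling_cost w m c.
Proof.
under eq_bigr => k _.
  under eq_bigr do rewrite ws_out_debias addrK.
  rewrite (sum_ws_prob_coord pi k
    (fun j b => (debias s (pi j == k) b * ((w j - c) / m j)) ^+ 2)).
  under eq_bigr do under eq_bigr do rewrite exprMn mulrA.
  under eq_bigr do rewrite -mulr_suml mean_debias_sq //.
  over.
rewrite exchange_big /= mulr_sumr; apply: eq_bigr => j _.
rewrite -mulr_sumr -mulr_suml big_split /= sumr_const card_ord (bigD1 (pi j)) //= eqxx.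
rewrite big1 ?addr0 => [|k]; last by rewrite eq_sym => /negbTE ->.
by rewrite -mulr_natl /=; ring.
Qed.

End OneVoter.

Lemma s_of_gt1 (R : realType) (eps : R) : 0 < eps -> 1 < s_of eps.
Proof.
by move=> eps_gt0; rewrite /s_of -[X in X < _]sqrtr1 ltr_sqrt ?expR_gt0 // expR_gt1.
Qed.

Lemma errMSE_le_cost {R : realType} {eps : R} {n d} {w m : 'I_d -> R} {c : R}
    (pis : 'I_n -> {perm 'I_d}) :
  0 < eps -> valid_m m -> (forall j, m j = 0 -> w j = c) ->
  errMSE eps w m c pis <=
  (n%:R)^-1 * (1 + d%:R * s_of eps / (s_of eps - 1) ^+ 2) * sampling_cost w m c.
Proof.
move=> /s_of_gt1 s_gt1 m_valid m_support; set s := s_of eps in s_gt1 *.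
set K := 1 + _ / _; rewrite /errMSE /= -/s.
have -> := @mse_average_independent _ n d _ (fun t => ws_prob s m t.1 t.2)
  (fun i k t => ws_out s w m c (pis i) t.1 t.2 k) (fun i k => scored w (pis i) k)
  (sum_ws_prob m_valid) (fun i k => ws_out_unbiased s_gt1 m_valid m_support (pis i) k).
apply: (@le_trans _ _ ((n%:R)^-1 ^+ 2 * \sum_(i < n) K * sampling_cost w m c)).
  rewrite ler_wpM2l ?exprn_ge0 ?invr_ge0 ?ler0n //; apply: ler_sum => i _.
  rewrite -(sum_ws_out_sq_dev s_gt1 (pis i)); apply: ler_sum => k _.
  apply: sum_sq_dev_mean_le; first exact: sum_ws_prob.
  exact: ws_out_unbiased.
rewrite sumr_const card_ord -[(_ * _) *+ n]mulr_natl mulrA -[X in _ <= X]mulrA.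
have [->|n_neq0] := eqVneq (n%:R : R) 0; first by rewrite invr0 expr0n !mul0r.
by rewrite expr2 -[_ * _ * n%:R]mulrA mulVf // mulr1.
Qed.

Lemma errMSE_le_bound (R : realType) (eps : R) n d (w m : 'I_d -> R) (c : R)
    (pis : 'I_n -> {perm 'I_d}) :
  0 < eps -> valid_m m -> (forall j, m j = 0 -> w j = c) ->
  sampling_cost w m c <= (\sum_j `|w j - c|) ^+ 2 ->
  errMSE eps w m c pis <= bound eps n w c.
Proof.
move=> eps_gt0 m_valid m_support cost_le.
apply: le_trans (errMSE_le_cost pis eps_gt0 m_valid m_support) _.
rewrite /bound ler_wpM2l // mulr_ge0 ?invr_ge0 ?ler0n // addr_ge0 //.
by rewrite divr_ge0 ?sqr_ge0 // mulr_ge0 ?sqrtr_ge0.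
Qed.

Section Sampling.
Context {R : realType} {d : nat} {w : 'I_d -> R} {c : R}.

Lemma sum_abs_dev_eq0 : \sum_j `|w j - c| = 0 -> forall j, w j = c.
Proof.
move=> /psumr_eq0P S0 j; apply/eqP; rewrite -subr_eq0 -normr_eq0.
by apply/eqP/S0 => // i _; exact: normr_ge0.
Qed.

Lemma sum_abs_dev_neq0 : (exists i j, w i != w j) -> \sum_j `|w j - c| != 0.
Proof.
move=> [i [j]]; apply: contra => /eqP /sum_abs_dev_eq0 wc.
by rewrite !wc.
Qed.

Lemma valid_m_star : \sum_j `|w j - c| != 0 -> valid_m (m_star w c).
Proof.
move=> S_neq0; split=> [j|]; last by rewrite /m_star -mulr_suml divff.
by rewrite /m_star divr_ge0 // sumr_ge0.
Qed.

Lemma m_star_support j : m_star w c j = 0 -> w j = c.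
Proof.
move=> /eqP; rewrite /m_star mulf_eq0 invr_eq0 normr_eq0 subr_eq0.
by case/orP=> [/eqP//|/eqP S0]; exact: sum_abs_dev_eq0.
Qed.

Lemma sampling_cost_m_star :
  sampling_cost w (m_star w c) c = (\sum_j `|w j - c|) ^+ 2.
Proof.
rewrite expr2 mulr_suml; apply: eq_bigr => j _; rewrite /m_star.
set a := w j - c; set S := \sum_i _.
have [->|a_neq0] := eqVneq a 0; first by rewrite normr0 !mul0r.
have [->|S_neq0] := eqVneq S 0; first by rewrite invr0 !mulr0 mul0r.
have na_neq0 : `|a| != 0 by rewrite normr_eq0.
by rewrite exprMn -(real_normK (num_real a)); field; rewrite na_neq0 S_neq0.
Qed.

Lemma valid_m_point_mass (j0 : 'I_d) : valid_m (fun j : 'I_d => (j == j0)%:R : R).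
Proof.
split=> [j|]; first exact: ler0n.
by rewrite (bigD1 j0) //= eqxx big1 ?addr0 // => j /negbTE ->.
Qed.

Lemma sampling_cost_const m : (forall j, w j = c) -> sampling_cost w m c = 0.
Proof. by move=> wc; apply: big1 => j _; rewrite wc subrr mul0r expr0n mulr0. Qed.

End Sampling.

Theorem theorem5p4 (R : realType) (eps : R) (n d : nat) (hd : (0 < d)%N)
    (w : 'I_d -> R) :
  0 < eps -> (0 < n)%N ->
  (forall i j : 'I_d, (i <= j)%N -> w j <= w i) ->
  (forall pis : 'I_n -> {perm 'I_d},
     exists (m : 'I_d -> R) (c : R), valid_m m /\
       errMSE eps w m c pis <= bound eps n w (w_mid hd w)) /\
  ((exists i j : 'I_d, w i != w j) ->
     valid_m (m_star w (w_mid hd w)) /\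
     forall pis : 'I_n -> {perm 'I_d},
       errMSE eps w (m_star w (w_mid hd w)) (w_mid hd w) pis
         <= bound eps n w (w_mid hd w)).
Proof.
move=> eps_gt0 _ _; set c := w_mid hd w.
have m_star_le (pis : 'I_n -> {perm 'I_d}) : valid_m (m_star w c) ->
    errMSE eps w (m_star w c) c pis <= bound eps n w c.
  move=> m_valid; apply: errMSE_le_bound => //; first exact: m_star_support.
  by rewrite sampling_cost_m_star.
split=> [pis|/(sum_abs_dev_neq0 (c := c))/valid_m_star m_valid]; last first.
  by split=> // pis; exact: m_star_le.
have [S_eq0|S_neq0] := eqVneq (\sum_j `|w j - c|) 0; last first.
  have m_valid := valid_m_star S_neq0.
  by exists (m_star w c), c; split=> //; exact: m_star_le.
have w_const := sum_abs_dev_eq0 S_eq0.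
have m_valid := valid_m_point_mass (Ordinal (mid_lt hd)).
exists (fun j => (j == Ordinal (mid_lt hd))%:R), c; split=> //.
apply: errMSE_le_bound => //.
by rewrite sampling_cost_const // sqr_ge0.
Qed.
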